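(* Let $n\ge2$, $\mu=(n-1)/n$, and let $M_{b|k}$ ($k\in[n]$, $b\in\{0,1\}$) be the projectors defined in the context. Then the observable $O_k:=M_{0|k}-M_{1|k}$ on $n-1$ qubits equals $$O_k=\sqrt{\frac{n-1}{n}}\,\mathcal E_k+\frac{1}{\sqrt{n(n-1)}}\,\mathcal K_k,$$ where for $k\in\{1,\dots,n-1\}$: $\mathcal E_k=Z_k$ and $$\mathcal K_k=\sum_{l=k+1}^{n-1}X_kZ_{k+1}\cdots Z_{l-1}X_l+X_kZ_{k+1}\cdots Z_{n-1}+\sum_{l=1}^{k-1}Y_lZ_{l+1}\cdots Z_{k-1}Y_k,$$ and for $k=n$: $\mathcal E_n=\prod_{j=1}^{n-1}Z_j$ and $\mathcal K_n=-\sum_{l=1}^{n-1}Z_1Z_2\cdots Z_{l-1}X_l$.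
   Context: Let $E_n$, $O_n$ be the even- and odd-weight strings in $\{0,1\}^n$. For $x\in E_n$, $\ket{\psi_x}=\ket{x_1\cdots x_{n-1}}$ (computational basis of $n-1$ qubits). For $y\in O_n$, $\ket{\psi_y}=\frac1{\sqrt n}\sum_{x\in E_n,\,d_H(x,y)=1}(A_n)_{yx}\ket{\psi_x}$, where $(A_n)_{yx}=\bra{y}A_n\ket{x}$ in the $n$-qubit computational basis (qubit 1 leftmost) and $A_n=\sum_{l=1}^nZ^{\otimes(l-1)}\otimes X\otimes I^{\otimes(n-l)}$. For $k\in[n]$, $b\in\{0,1\}$, $S_{k,b}=\sum_{x\in E_n,x_k=b}\ket{\psi_x}\bra{\psi_x}+\sum_{y\in O_n,y_k=b}\ket{\psi_y}\bra{\psi_y}$ and $M_{b|k}$ is the orthogonal projector onto the eigenspace of $S_{k,b}$ for eigenvalue $1+\sqrt{\mu}$. $X_j,Y_j,Z_j$ denote Pauli operators on qubit $j$ of the $n-1$ qubits; empty products of $Z$'s are the identity. *)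

(* Conventions.  Qubits and bit positions are
   indexed 1-based by natural numbers, exactly as in the paper. *)
From HB Require Import structures.
From mathcomp Require Import all_boot all_order all_algebra.
From mathcomp Require Import algC.
Set Implicit Arguments. Unset Strict Implicit. Unset Printing Implicit Defensive.
Import Order.TTheory GRing.Theory Num.Theory.
Local Open Scope ring_scope.

Definition bits (m : nat) := {ffun 'I_m -> bool}.
Definition dim (m : nat) : nat := #|{: bits m}|.
(* operators and (column) vectors on m qubits, basis indexed by enum_rank *)
Definition Opr (m : nat) := 'M[algC]_(dim m).
Definition Vec (m : nat) := 'cV[algC]_(dim m).

Definition bit m (x : bits m) (j : nat) : bool :=
  [exists i : 'I_m, (i.+1 == j) && x i].
Definition flip m (x : bits m) (j : nat) : bits m :=
  [ffun i : 'I_m => if i.+1 == j then ~~ x i else x i].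

Definition ket m (x : bits m) : Vec m := delta_mx (enum_rank x) 0.
Definition op_of m (f : bits m -> bits m -> algC) : Opr m :=
  \matrix_(i, j) f (enum_val i) (enum_val j).
Definition mel m (A : Opr m) (y x : bits m) : algC := A (enum_rank y) (enum_rank x).
Definition adj m (A : 'M[algC]_(dim m, 1)) : 'M[algC]_(1, dim m) :=
  (map_mx (fun z => z^*) A)^T.
Definition adjO m (A : Opr m) : Opr m := (map_mx (fun z => z^*) A)^T.

Definition PX m (j : nat) : Opr m := op_of (fun y x => (y == flip x j)%:R).
Definition PZ m (j : nat) : Opr m :=
  op_of (fun y x => (y == x)%:R * (-1) ^+ bit x j).
Definition PY m (j : nat) : Opr m :=
  op_of (fun y x => (y == flip x j)%:R * (if bit x j then - 'i else 'i)).

(* Zs m a b = Z_a Z_(a+1) ... Z_(b-1)  (identity if b <= a) *)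
Definition Zs m (a b : nat) : Opr m :=
  foldr (fun j A => PZ m j *m A) 1%:M (iota a (b - a)).

Definition weight m (x : bits m) : nat := #|[set i | x i]|.
Definition evenw m (x : bits m) : bool := ~~ odd (weight x).
Definition dH m (x y : bits m) : nat := #|[set i | x i != y i]|.

Definition An (n : nat) : Opr n := \sum_(1 <= l < n.+1) (Zs n 1 l *m PX n l).

Definition trunc n (x : bits n) : bits n.-1 := [ffun i : 'I_n.-1 => bit x i.+1].

Definition psi n (x : bits n) : Vec n.-1 :=
  if evenw x then ket (trunc x)
  else (sqrtC n%:R)^-1 *:
       \sum_(x' : bits n | evenw x' && (dH x x' == 1%N))
          (mel (An n) x x' *: ket (trunc x')).

Definition Sop n (k : nat) (b : bool) : Opr n.-1 :=
  \sum_(x : bits n | bit x k == b) (psi x *m adj (psi x)).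

Definition mu (n : nat) : algC := (n.-1)%:R / n%:R.

Definition is_orth_proj_eig m (S : Opr m) (lam : algC) (P : Opr m) : Prop :=
  [/\ adjO P = P, P *m P = P &
      forall v : Vec m, P *m v = v <-> S *m v = lam *: v].

Definition Ecal n (k : nat) : Opr n.-1 :=
  if (k < n)%N then PZ n.-1 k else Zs n.-1 1 n.

Definition Kcal n (k : nat) : Opr n.-1 :=
  if (k < n)%N then
    \sum_(k.+1 <= l < n) (PX n.-1 k *m Zs n.-1 k.+1 l *m PX n.-1 l)
    + PX n.-1 k *m Zs n.-1 k.+1 n
    + \sum_(1 <= l < k) (PY n.-1 l *m Zs n.-1 l.+1 k *m PY n.-1 k)
  else - \sum_(1 <= l < n) (Zs n.-1 1 l *m PX n.-1 l).

From Pilot Require Import Defs.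
From HB Require Import structures.
From mathcomp Require Import all_boot all_order all_algebra.
From mathcomp Require Import algC.
From mathcomp Require Import ring zify.
Import Order.TTheory GRing.Theory Num.Theory.
Local Open Scope ring_scope.
Set Implicit Arguments. Unset Strict Implicit. Unset Printing Implicit Defensive.

(* Write n = N + 1.  Every N-bit string z has one even and one odd one-bit
   extension; psi sends the even one to |z> and the odd one to G|z>/sqrt n,
   where G = sum_(l = 1..n) Z_1 ... Z_(l-1) X_l on N qubits (X_n being read as
   the identity) is what A_n becomes once the parity bit is dropped.  Hence
   S_(k,b) = D + G D' G / n with D, D' diagonal projectors of the form
   (1 +- E_k) / 2.  The terms of G are Pauli strings that pairwise
   anticommute, so G^2 = n, and conjugating G by E_k or by the k-th term of G
   only flips signs; this gives S_(k,b) = 1 + (-1)^b sqrt(mu) O_k, where O_k is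
   the right-hand side of the theorem, O_k^2 = 1 and O_k is self-adjoint.  The
   eigenspace of S_(k,b) for 1 + sqrt(mu) is then the range of
   (1 + (-1)^b O_k) / 2, whence M_(0|k) - M_(1|k) = O_k. *)

Ltac case_cmp :=
  repeat match goal with
  | |- context [?x == ?y] => case: (@eqP _ x y) => ?
  | |- context [(?x <= ?y)%N] => case: (leqP x y) => ?
  end.

Ltac nat_solve := case_cmp; try done; try lia.

Section MatrixElements.
Variable m : nat.
Implicit Types (A B : Opr m) (u v : Vec m).

Lemma mel_ext A B : (forall y x, mel A y x = mel B y x) -> A = B.
Proof.
move=> eqAB; apply/matrixP => i j; have := eqAB (enum_val i) (enum_val j).
by rewrite /mel !enum_valK.
Qed.

Lemma mel_op_of (f : bits m -> bits m -> algC) y x : mel (op_of f) y x = f y x.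
Proof. by rewrite /mel /op_of mxE !enum_rankK. Qed.

Lemma big_enum_rank (F : 'I_(Defs.dim m) -> algC) :
  \sum_i F i = \sum_(w : bits m) F (enum_rank w).
Proof.
by rewrite (reindex (@enum_rank (bits m))) //; apply: onW_bij; apply: enum_rank_bij.
Qed.

Lemma mel_mul A B y x : mel (A *m B) y x = \sum_w mel A y w * mel B w x.
Proof. by rewrite /mel mxE big_enum_rank. Qed.

Lemma mel_add A B y x : mel (A + B) y x = mel A y x + mel B y x.
Proof. by rewrite /mel mxE. Qed.

Lemma mel_opp A y x : mel (- A) y x = - mel A y x.
Proof. by rewrite /mel mxE. Qed.

Lemma mel_scale c A y x : mel (c *: A) y x = c * mel A y x.
Proof. by rewrite /mel mxE. Qed.

Lemma mel_sum (I : Type) (r : seq I) (P : pred I) (F : I -> Opr m) y x :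
  mel (\sum_(i <- r | P i) F i) y x = \sum_(i <- r | P i) mel (F i) y x.
Proof. by rewrite /mel summxE. Qed.

Lemma mel1 y x : mel (1%:M : Opr m) y x = (y == x)%:R.
Proof. by rewrite /mel mxE (inj_eq enum_rank_inj). Qed.

Lemma mel_adjO A y x : mel (adjO A) y x = (mel A x y)^*.
Proof. by rewrite /mel /adjO !mxE. Qed.

Definition vel v (y : bits m) : algC := v (enum_rank y) 0.

Lemma vel_ext u v : (forall y, vel u y = vel v y) -> u = v.
Proof.
move=> equv; apply/matrixP => i j; rewrite (ord1 j).
by have := equv (enum_val i); rewrite /vel enum_valK.
Qed.

Lemma vel_ket z y : vel (ket z) y = (y == z)%:R.
Proof. by rewrite /vel /ket mxE (inj_eq enum_rank_inj) eqxx andbT. Qed.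

Lemma vel_add u v y : vel (u + v) y = vel u y + vel v y.
Proof. by rewrite /vel mxE. Qed.

Lemma vel_scale c v y : vel (c *: v) y = c * vel v y.
Proof. by rewrite /vel mxE. Qed.

Lemma vel_sum (I : Type) (r : seq I) (P : pred I) (F : I -> Vec m) y :
  vel (\sum_(i <- r | P i) F i) y = \sum_(i <- r | P i) vel (F i) y.
Proof. by rewrite /vel summxE. Qed.

Lemma vel_mul_ket A z y : vel (A *m ket z) y = mel A y z.
Proof.
rewrite /vel mxE big_enum_rank (bigD1 z) //= big1 => [|w /negbTE w_z].
  by rewrite -/(vel _ _) vel_ket eqxx mulr1 addr0.
by rewrite -/(vel _ _) vel_ket w_z mulr0.
Qed.

Lemma mel_outer u v y x : mel (u *m adj v) y x = vel u y * (vel v x)^*.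
Proof. by rewrite /mel /vel mxE big_ord1 /adj !mxE. Qed.

Lemma adjO_mul A B : adjO (A *m B) = adjO B *m adjO A.
Proof.
apply: mel_ext => y x; rewrite mel_adjO !mel_mul rmorph_sum.
by apply: eq_bigr => w _; rewrite rmorphM !mel_adjO mulrC.
Qed.

Lemma adj_mul A v : adj (A *m v) = adj v *m adjO A.
Proof. by rewrite /adj /adjO map_mxM trmx_mul. Qed.

Lemma adj_scale c v : adj (c *: v) = c^* *: adj v.
Proof. by rewrite /adj map_mxZ linearZ. Qed.

End MatrixElements.

Ltac to_mel := apply: mel_ext => ? ?; rewrite ?(mel_add, mel_opp, mel_scale, mel1).

Section BitStrings.
Variable m : nat.
Implicit Types (a b x y : bits m) (P Q : nat -> bool).

Definition bxor a b : bits m := [ffun i => a i (+) b i].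
Definition bdot a b : bool := \big[addb/false]_i (a i && b i).
Definition bits_of P : bits m := [ffun i : 'I_m => P i.+1].
Definition zero_bits : bits m := [ffun _ => false].

Lemma bxorC a b : bxor a b = bxor b a.
Proof. by apply/ffunP => i; rewrite !ffunE addbC. Qed.

Lemma bxorA a b x : bxor a (bxor b x) = bxor (bxor a b) x.
Proof. by apply/ffunP => i; rewrite !ffunE addbA. Qed.

Lemma bxorK a b : bxor (bxor a b) b = a.
Proof. by apply/ffunP => i; rewrite !ffunE addbK. Qed.

Lemma bxor0 a : bxor a zero_bits = a.
Proof. by apply/ffunP => i; rewrite !ffunE addbF. Qed.

Lemma bxor0l a : bxor zero_bits a = a.
Proof. by rewrite bxorC bxor0. Qed.

Lemma bxorxx a : bxor a a = zero_bits.
Proof. by apply/ffunP => i; rewrite !ffunE addbb. Qed.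

Lemma bxor_bits_of P Q : bxor (bits_of P) (bits_of Q) = bits_of (fun j => P j (+) Q j).
Proof. by apply/ffunP => i; rewrite !ffunE. Qed.

Lemma eq_bits_of P Q :
  (forall j, (1 <= j <= m)%N -> P j = Q j) -> bits_of P = bits_of Q.
Proof. by move=> eqPQ; apply/ffunP => i; rewrite !ffunE eqPQ // ltn_ord. Qed.

Lemma bits_of_false P :
  (forall j, (1 <= j <= m)%N -> P j = false) -> bits_of P = zero_bits.
Proof. by move=> P0; apply/ffunP => i; rewrite !ffunE P0 // ltn_ord. Qed.

Lemma bdotC a b : bdot a b = bdot b a.
Proof. by apply: eq_bigr => i _; rewrite andbC. Qed.

Lemma bdot_xorr a x y : bdot a (bxor x y) = bdot a x (+) bdot a y.
Proof.
rewrite /bdot -big_split /=; apply: eq_bigr => i _; rewrite ffunE.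
by case: (a i).
Qed.

Lemma bdot_xorl a b x : bdot (bxor a b) x = bdot a x (+) bdot b x.
Proof. by rewrite bdotC bdot_xorr !(bdotC x). Qed.

Lemma bdot0r a : bdot a zero_bits = false.
Proof. by rewrite /bdot big1 // => i _; rewrite ffunE andbF. Qed.

Lemma bdot0l a : bdot zero_bits a = false.
Proof. by rewrite bdotC bdot0r. Qed.

Lemma bdot_bits_of_pred1 P l :
  bdot (bits_of P) (bits_of (pred1 l)) = [&& (1 <= l)%N, (l <= m)%N & P l].
Proof.
have [/andP[l_gt0 l_le]|l_out] := boolP [&& (1 <= l)%N & (l <= m)%N].
  have lt_l : (l.-1 < m)%N by rewrite prednK.
  rewrite /bdot (bigD1 (Ordinal lt_l)) //= big1 => [|i ne_il].
    by rewrite !ffunE /= prednK // eqxx andbT l_gt0 l_le addbF.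
  rewrite !ffunE /=; apply/negbTE/negP => /andP[_ /eqP e].
  by move: ne_il; rewrite -(inj_eq val_inj) /= -e eqxx.
rewrite /bdot big1 => [|i _]; first by move: l_out; case: (1 <= l)%N; case: (l <= m)%N.
rewrite !ffunE /=; apply/negbTE/negP => /andP[_ /eqP e].
by move: l_out; rewrite -e ltn_ord.
Qed.

Lemma bit_ord x (i : 'I_m) : bit x i.+1 = x i.
Proof.
apply/existsP/idP => [[j /andP[/eqP e xj]]|xi].
  by have -> : i = j by apply: val_inj; case: e.
by exists i; rewrite eqxx.
Qed.

Lemma bits_of_bit x : bits_of (bit x) = x.
Proof. by apply/ffunP => i; rewrite ffunE bit_ord. Qed.

End BitStrings.
Arguments zero_bits {m}.

Definition unit_bits m (l : nat) : bits m := bits_of m (pred1 l).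
Definition interval_bits m (a b : nat) : bits m :=
  bits_of m (fun j => (a <= j)%N && (j < b)%N).
Definition ones_bits m : bits m := bits_of m (fun _ => true).
Definition bpar m (x : bits m) : bool := bdot (ones_bits m) x.

Ltac mask_solve :=
  rewrite ?bxor0 ?bxor0l /unit_bits /interval_bits /ones_bits ?bxor_bits_of;
  apply: eq_bits_of => ? ? /=; case_cmp; try (exfalso; lia); done.

Lemma bdot_interval_unit m a b l :
  bdot (interval_bits m a b) (unit_bits m l) = [&& (1 <= l)%N, (l <= m)%N & (a <= l < b)%N].
Proof. exact: bdot_bits_of_pred1. Qed.

Lemma bdot_unit_unit m k l :
  bdot (unit_bits m k) (unit_bits m l) = [&& (1 <= l)%N, (l <= m)%N & k == l].
Proof. by rewrite /unit_bits bdot_bits_of_pred1 /= eq_sym. Qed.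

Lemma bit_bdot m (x : bits m) j : bit x j = bdot (unit_bits m j) x.
Proof.
rewrite bdotC /unit_bits; have := @bdot_bits_of_pred1 m (bit x) j; rewrite bits_of_bit => ->.
have [/existsP[i /andP[/eqP <- _]]|_] := boolP (bit x j); last by rewrite !andbF.
by rewrite ltn_ord.
Qed.

Lemma flip_bxor m (x : bits m) j : flip x j = bxor x (unit_bits m j).
Proof.
apply/ffunP => i; rewrite /unit_bits /bits_of !ffunE /=.
by case: (_ == _); rewrite ?addbT ?addbF.
Qed.

Lemma unit_bits_out N : unit_bits N N.+1 = zero_bits.
Proof. by apply: bits_of_false => j /andP[_ j_le] /=; apply/eqP; lia. Qed.

Lemma odd_weight m (x : bits m) : odd (weight x) = bpar x.
Proof.
rewrite /weight /bpar /bdot -sum1_card big_mkcond /=.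
rewrite (big_morph odd oddD (erefl (odd 0))).
by apply: eq_bigr => i _; rewrite inE ffunE; case: (x i).
Qed.

Lemma dH_bxor m (x e : bits m) : dH (bxor x e) x = weight e.
Proof.
rewrite /dH /weight; apply: eq_card => i; rewrite !inE ffunE.
by case: (x i); case: (e i).
Qed.

Lemma weight_unit_bits m l : (1 <= l <= m)%N -> weight (unit_bits m l) = 1%N.
Proof.
move=> /andP[l_gt0 l_le]; have lt_l : (l.-1 < m)%N by rewrite prednK.
rewrite /weight (_ : [set i | unit_bits m l i] = [set Ordinal lt_l]) ?cards1 //.
apply/setP => i; rewrite !inE ffunE /=; apply/eqP/eqP => [e|->] /=.
  by apply: val_inj => /=; rewrite -e.
by rewrite prednK.
Qed.

Section AppendBit.
Variable N : nat.
Implicit Types (z w : bits N) (c d : bool).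

Definition snoc_bits z c : bits N.+1 :=
  [ffun i : 'I_N.+1 => if unlift ord_max i is Some j then z j else c].

Lemma snoc_bits_lift z c j : snoc_bits z c (lift ord_max j) = z j.
Proof. by rewrite ffunE liftK. Qed.

Lemma snoc_bits_max z c : snoc_bits z c ord_max = c.
Proof. by rewrite ffunE unlift_none. Qed.

Lemma snoc_bits_trunc (x : bits N.+1) : snoc_bits (trunc x) (x ord_max) = x.
Proof.
apply/ffunP => i; case: (unliftP ord_max i) => [j ->|->]; rewrite ?snoc_bits_max //.
rewrite snoc_bits_lift ffunE.
have -> : j.+1 = (lift ord_max j).+1 by rewrite /= /bump leqNgt ltn_ord.
exact: bit_ord.
Qed.

Lemma trunc_snoc_bits z c : trunc (n := N.+1) (snoc_bits z c) = z.
Proof.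
apply/ffunP => j; rewrite ffunE.
have -> : j.+1 = (lift ord_max j).+1 by rewrite /= /bump leqNgt ltn_ord.
by rewrite bit_ord snoc_bits_lift.
Qed.

Lemma eq_snoc_bits z c w d : (snoc_bits z c == snoc_bits w d) = (z == w) && (c == d).
Proof.
apply/eqP/andP => [e|[/eqP-> /eqP->]] //; split; apply/eqP.
  by rewrite -(trunc_snoc_bits z c) e trunc_snoc_bits.
by rewrite -(snoc_bits_max z c) e snoc_bits_max.
Qed.

Lemma bits_of_snoc P : bits_of N.+1 P = snoc_bits (bits_of N P) (P N.+1).
Proof.
apply/ffunP => i; case: (unliftP ord_max i) => [j ->|->]; rewrite [LHS]ffunE.
  by rewrite snoc_bits_lift ffunE /= /bump leqNgt ltn_ord.
by rewrite snoc_bits_max.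
Qed.

Lemma bxor_snoc z c w d :
  bxor (snoc_bits z c) (snoc_bits w d) = snoc_bits (bxor z w) (c (+) d).
Proof.
apply/ffunP => i; case: (unliftP ord_max i) => [j ->|->]; rewrite [LHS]ffunE.
  by rewrite !snoc_bits_lift ffunE.
by rewrite !snoc_bits_max.
Qed.

Lemma bdot_snoc z c w d : bdot (snoc_bits z c) (snoc_bits w d) = bdot z w (+) (c && d).
Proof.
rewrite /bdot big_ord_recr /= !snoc_bits_max; congr addb.
apply: eq_bigr => i _.
have -> : widen_ord (leqnSn N) i = lift ord_max i.
  by apply: val_inj; rewrite /= /bump leqNgt ltn_ord.
by rewrite !snoc_bits_lift.
Qed.

Lemma bit_snoc z c k : bit (snoc_bits z c) k = if k == N.+1 then c else bit z k.
Proof.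
rewrite !bit_bdot /unit_bits bits_of_snoc -/(unit_bits N k) bdot_snoc.
have [->|ne_k] := eqVneq k N.+1; first by rewrite /= unit_bits_out bdot0l eqxx.
by rewrite /= eq_sym (negbTE ne_k) addbF.
Qed.

Lemma bpar_snoc z c : bpar (snoc_bits z c) = bpar z (+) c.
Proof. by rewrite /bpar /ones_bits bits_of_snoc bdot_snoc andTb. Qed.

Lemma evenw_snoc z c : evenw (snoc_bits z c) = ~~ (bpar z (+) c).
Proof. by rewrite /evenw odd_weight bpar_snoc. Qed.

Lemma sum_bits_snoc (V : zmodType) (F : bits N.+1 -> V) :
  \sum_x F x = \sum_z (F (snoc_bits z (bpar z)) + F (snoc_bits z (~~ bpar z))).
Proof.
rewrite (reindex (fun p : bits N * bool => snoc_bits p.1 p.2)) /=; last first.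
  exists (fun x => (trunc x, x ord_max)) => [[z c] _|x _] /=.
    by rewrite trunc_snoc_bits snoc_bits_max.
  exact: snoc_bits_trunc.
rewrite -(pair_bigA _ (fun z c => F (snoc_bits z c))) /=.
by apply: eq_bigr => z _; rewrite big_bool /=; case: (bpar z); rewrite // addrC.
Qed.

End AppendBit.

(* [pauli a b c] is c X^a Z^b: it has matrix elements c [y = x + a] (-1)^(b.x). *)
Definition pauli m (a b : bits m) (c : algC) : Opr m :=
  op_of (fun y x => (y == bxor x a)%:R * c * (-1) ^+ bdot b x).

Section PauliStrings.
Variable m : nat.
Implicit Types (a b : bits m) (c d : algC).

Lemma mel_pauli a b c y x :
  mel (pauli a b c) y x = (y == bxor x a)%:R * c * (-1) ^+ bdot b x.
Proof. exact: mel_op_of. Qed.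

Lemma pauli_mul a1 b1 a2 b2 c1 c2 :
  pauli a1 b1 c1 *m pauli a2 b2 c2 =
  pauli (bxor a1 a2) (bxor b1 b2) (c1 * c2 * (-1) ^+ bdot b1 a2).
Proof.
apply: mel_ext => y x; rewrite mel_mul mel_pauli.
rewrite (bigD1 (bxor x a2)) //= big1 => [|w /negbTE ne_w]; last first.
  by rewrite !mel_pauli ne_w !mul0r mulr0.
rewrite !mel_pauli eqxx addr0 mul1r -bxorA (bxorC a2) bdot_xorr bdot_xorl !signr_addb.
by case: (y == _); rewrite ?mul0r // !mul1r; ring.
Qed.

Lemma scale_pauli a b c d : c *: pauli a b d = pauli a b (c * d).
Proof. by apply: mel_ext => y x; rewrite mel_scale !mel_pauli; ring. Qed.

Lemma add_pauli a b c d : pauli a b c + pauli a b d = pauli a b (c + d).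
Proof. by apply: mel_ext => y x; rewrite mel_add !mel_pauli; ring. Qed.

Lemma opp_pauli a b c : - pauli a b c = pauli a b (- c).
Proof. by apply: mel_ext => y x; rewrite mel_opp !mel_pauli; ring. Qed.

Lemma pauli0 a b : pauli a b 0 = 0.
Proof. by rewrite -(scale0r (pauli a b 1)) scale_pauli mul0r. Qed.

Lemma pauli1 : pauli zero_bits zero_bits 1 = 1%:M :> Opr m.
Proof. by apply: mel_ext => y x; rewrite mel1 mel_pauli bxor0 bdot0l !mulr1. Qed.

Lemma pauli_sq a b : bdot b a = false -> pauli a b 1 *m pauli a b 1 = 1%:M.
Proof. by move=> ba; rewrite pauli_mul !bxorxx ba !mulr1 pauli1. Qed.

Lemma pauli_conj a b a' b' c : bdot b a = false ->
  pauli a b 1 *m pauli a' b' c *m pauli a b 1 =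
  pauli a' b' (c * (-1) ^+ (bdot b a' (+) bdot b' a)).
Proof.
move=> ba; rewrite !pauli_mul (bxorC a a') -bxorA bxorxx bxor0.
rewrite (bxorC b b') -bxorA bxorxx bxor0 bdot_xorl ba addbF signr_addb.
by congr pauli; ring.
Qed.

Lemma PX_pauli j : PX m j = pauli (unit_bits m j) zero_bits 1.
Proof. by apply: mel_ext => y x; rewrite !mel_op_of flip_bxor bdot0l !mulr1. Qed.

Lemma PZ_pauli j : PZ m j = pauli zero_bits (unit_bits m j) 1.
Proof. by apply: mel_ext => y x; rewrite !mel_op_of bxor0 bit_bdot mulr1. Qed.

Lemma PY_pauli j : PY m j = pauli (unit_bits m j) (unit_bits m j) 'i.
Proof.
apply: mel_ext => y x; rewrite !mel_op_of flip_bxor bit_bdot.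
by case: (bdot _ _); rewrite ?expr1 ?expr0; ring.
Qed.

Lemma Zs_pauli (i j : nat) : Zs m i j = pauli zero_bits (interval_bits m i j) 1.
Proof.
suff Zs_iota (d i' : nat) : foldr (fun l A => PZ m l *m A) 1%:M (iota i' d) =
                    pauli zero_bits (interval_bits m i' (i' + d)) 1.
  rewrite /Zs Zs_iota; congr pauli; mask_solve.
elim: d i' => [|d IHd] i' /=.
  by rewrite -pauli1; congr pauli; apply/esym/bits_of_false => l _; nat_solve.
rewrite IHd PZ_pauli pauli_mul bxor0 bdot0r !mulr1; congr pauli; mask_solve.
Qed.

End PauliStrings.

(* gamma m l = Z_1 ... Z_(l-1) X_l; for l = m + 1 the X factor is the identity. *)
Definition gamma m (l : nat) : Opr m := pauli (unit_bits m l) (interval_bits m 1 l) 1.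
Definition Gsum N : Opr N := \sum_(1 <= l < N.+2) gamma N l.

Lemma bdot_interval_unit_same m l : bdot (interval_bits m 1 l) (unit_bits m l) = false.
Proof. by rewrite bdot_interval_unit ltnn !andbF. Qed.

Lemma Zs_PX_gamma m l : Zs m 1 l *m PX m l = gamma m l.
Proof.
by rewrite Zs_pauli PX_pauli pauli_mul bxor0l bxor0 bdot_interval_unit_same !mulr1.
Qed.

Lemma mel_gamma m l y x :
  mel (gamma m l) y x =
  (y == bxor x (unit_bits m l))%:R * (-1) ^+ bdot (interval_bits m 1 l) x.
Proof. by rewrite mel_pauli mulr1. Qed.

Lemma gamma_sq m l : gamma m l *m gamma m l = 1%:M.
Proof. exact/pauli_sq/bdot_interval_unit_same. Qed.

Lemma gamma_anticomm N l l' : (1 <= l <= N.+1)%N -> (1 <= l' <= N.+1)%N ->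
  gamma N l *m gamma N l' + gamma N l' *m gamma N l = if l == l' then 2%:R *: 1%:M else 0.
Proof.
move=> l_in l'_in; rewrite /gamma !pauli_mul (bxorC (unit_bits N l')).
rewrite (bxorC (interval_bits N 1 l')) add_pauli.
have [<-|ne_l] := eqVneq l l'.
  by rewrite !bxorxx bdot_interval_unit_same -pauli1 scale_pauli !mulr1.
have : bdot (interval_bits N 1 l) (unit_bits N l') (+)
       bdot (interval_bits N 1 l') (unit_bits N l).
  by rewrite !bdot_interval_unit; move: l_in l'_in ne_l; nat_solve.
by case: (bdot _ _); case: (bdot _ _) => //= _;
  rewrite !mul1r ?expr1 ?expr0 ?subrr ?addNr pauli0.
Qed.

Lemma Gsum_sq N : Gsum N *m Gsum N = N.+1%:R *: 1%:M.
Proof.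
have GG2 : 2%:R *: (Gsum N *m Gsum N) = (2%:R * N.+1%:R) *: 1%:M.
  rewrite [LHS]scaler_nat mulr2n.
  have -> : Gsum N *m Gsum N =
             \sum_(1 <= l < N.+2) \sum_(1 <= l' < N.+2) gamma N l *m gamma N l'.
    by rewrite mulmx_suml; apply: eq_bigr => l _; rewrite mulmx_sumr.
  rewrite [X in _ + X]exchange_big_nat -big_split /=.
  rewrite (eq_big_nat _ _ (F2 := fun=> 2%:R *: 1%:M)) => [|l l_in].
    by rewrite sumr_const_nat subSS subn0 -scaler_nat scalerA mulrC.
  rewrite -big_split /= (eq_big_nat _ _ (F2 := fun l' => if l' == l then 2%:R *: 1%:M else 0)).
    by rewrite -big_mkcond big_nat1_eq l_in.
  by move=> l' l'_in /=; rewrite eq_sym gamma_anticomm //; move: l_in l'_in; nat_solve.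
have two_neq0 : (2%:R : algC) != 0 by rewrite pnatr_eq0.
by apply: (scalerI two_neq0); rewrite GG2 scalerA.
Qed.

Lemma adjO_Gsum N : adjO (Gsum N) = Gsum N.
Proof.
apply: mel_ext => y x; rewrite mel_adjO !mel_sum rmorph_sum.
apply: eq_big_nat => l _; rewrite !mel_gamma rmorphM rmorphXn rmorph_nat rmorphN1.
have [->|ne_x] := eqVneq x (bxor y (unit_bits N l)).
  by rewrite bxorK eqxx bdot_xorr bdot_interval_unit_same addbF.
suff -> : (y == bxor x (unit_bits N l)) = false by rewrite !mul0r.
by apply/negbTE; apply: contra ne_x => /eqP ->; rewrite bxorK.
Qed.

Lemma An_gamma n : An n = \sum_(1 <= l < n.+1) gamma n l.
Proof. by apply: eq_bigr => l _; rewrite Zs_PX_gamma. Qed.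

Lemma mel_An_far n (y x : bits n) : dH y x != 1%N -> mel (An n) y x = 0.
Proof.
move=> far; rewrite An_gamma mel_sum big1_seq // => l.
rewrite mem_index_iota => /andP[l_gt0 l_le].
rewrite mel_gamma; have [e|] := eqVneq y (bxor x (unit_bits n l)); last by rewrite mul0r.
by move: far; rewrite e dH_bxor weight_unit_bits ?eqxx // l_gt0 -ltnS.
Qed.

Section Psi.
Variable N : nat.
Local Notation n := N.+1.
Implicit Types y z : bits N.

Lemma psi_even z : psi (snoc_bits z (bpar z)) = ket z.
Proof. by rewrite /psi evenw_snoc addbb /= trunc_snoc_bits. Qed.

Lemma mel_An_snoc z y :
  mel (An n) (snoc_bits z (~~ bpar z)) (snoc_bits y (bpar y)) = mel (Gsum N) y z.
Proof.
rewrite An_gamma !mel_sum; apply: eq_big_nat => l /andP[l_gt0 l_le].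
rewrite !mel_gamma {1}/unit_bits bits_of_snoc -/(unit_bits N l) bxor_snoc eq_snoc_bits.
rewrite /interval_bits bits_of_snoc -/(interval_bits N 1 l) bdot_snoc /=.
rewrite (_ : (N.+1 < l)%N = false) ?andbF ?addbF; last by apply/negbTE; rewrite -leqNgt -ltnS.
have [->|ne_y] := eqVneq y (bxor z (unit_bits N l)); last first.
  suff -> : (z == bxor y (unit_bits N l)) = false by rewrite !mul0r.
  by apply/negbTE; apply: contra ne_y => /eqP ->; rewrite bxorK.
rewrite bxorK eqxx /= /bpar bdot_xorr bdot_bits_of_pred1 /= -/(bpar z).
rewrite bdot_xorr bdot_interval_unit_same addbF andbT -addbA.
suff -> : (0 < l <= N)%N (+) (N.+1 == l) by case: (bpar z).
by nat_solve.
Qed.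

Lemma psi_odd z : psi (snoc_bits z (~~ bpar z)) = (sqrtC n%:R)^-1 *: (Gsum N *m ket z).
Proof.
rewrite /psi evenw_snoc addbN addbb /=.
congr (_ *: _); apply: vel_ext => y; rewrite vel_sum vel_mul_ket big_mkcond /=.
rewrite (bigD1 (snoc_bits y (bpar y))) //= evenw_snoc addbb /= big1 => [|x ne_x].
  case: ifP => [_|/negbT far]; last by rewrite addr0 -mel_An_snoc mel_An_far.
  by rewrite vel_scale vel_ket trunc_snoc_bits eqxx mulr1 addr0 mel_An_snoc.
case: ifP => // /andP[even_x _]; rewrite vel_scale vel_ket.
suff -> : (y == trunc x) = false by rewrite mulr0.
apply/negbTE; apply: contra ne_x => /eqP ->.
move: even_x; rewrite -{1 2}(snoc_bits_trunc x) evenw_snoc eq_snoc_bits eqxx /=.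
by case: (x ord_max); case: (bpar _).
Qed.

Definition diag_proj (c : pred (bits N)) : Opr N := \sum_(z | c z) ket z *m adj (ket z).

Lemma psi_odd_outer z :
  psi (snoc_bits z (~~ bpar z)) *m adj (psi (snoc_bits z (~~ bpar z))) =
  n%:R^-1 *: (Gsum N *m (ket z *m adj (ket z)) *m Gsum N).
Proof.
rewrite psi_odd adj_scale adj_mul adjO_Gsum -scalemxAl -scalemxAr scalerA !mulmxA.
by rewrite geC0_conj ?invr_ge0 ?sqrtC_ge0 ?ler0n // -invfM -expr2 sqrtCK.
Qed.

Lemma Sop_diag_proj k b :
  Sop n k b = diag_proj (fun z => bit (snoc_bits z (bpar z)) k == b) +
    n%:R^-1 *: (Gsum N *m diag_proj (fun z => bit (snoc_bits z (~~ bpar z)) k == b) *m Gsum N).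
Proof.
rewrite /Sop big_mkcond sum_bits_snoc big_split /= /diag_proj mulmx_sumr mulmx_suml.
rewrite scaler_sumr [X in _ = X + _]big_mkcond [X in _ = _ + X]big_mkcond.
congr (_ + _); apply: eq_bigr => z _; first by rewrite psi_even.
by case: ifP => _; rewrite ?psi_odd_outer ?mulmx0 ?mul0mx ?scaler0.
Qed.

Lemma eq_diag_proj (c1 c2 : pred (bits N)) : c1 =1 c2 -> diag_proj c1 = diag_proj c2.
Proof. by move=> eq_c; apply: eq_bigl. Qed.

Lemma diag_proj_pauli (mask : bits N) (s : bool) :
  diag_proj (fun z => bdot mask z == s) = 2^-1 *: (1%:M + (-1) ^+ s *: pauli zero_bits mask 1).
Proof.
apply: mel_ext => y x; rewrite mel_scale mel_add mel1 mel_scale mel_pauli bxor0.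
rewrite /diag_proj mel_sum big_mkcond (bigD1 x) //= big1 ?addr0 => [|z ne_z]; last first.
  by case: ifP => // _; rewrite mel_outer !vel_ket (eq_sym x) (negbTE ne_z) conjC0 mulr0.
rewrite mel_outer !vel_ket eqxx conjC1 mulr1.
case: (y == x) => /=; last by case: ifP => _; rewrite mul0r mulr0 add0r mulr0.
by case: (bdot mask x); case: s => /=; rewrite ?expr0 ?expr1; field.
Qed.

End Psi.

Lemma Sop_selfadj n k b : adjO (Sop n k b) = Sop n k b.
Proof.
apply: mel_ext => y x; rewrite mel_adjO /Sop !mel_sum rmorph_sum.
by apply: eq_bigr => x' _; rewrite !mel_outer rmorphM /= conjCK mulrC.
Qed.

Definition Emask N k : bits N := if k == N.+1 then ones_bits N else unit_bits N k.
Definition Epauli N k : Opr N := pauli zero_bits (Emask N k) 1.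
Definition Xop N k : Opr N := Epauli N k *m gamma N k *m Gsum N.
Definition Rop N k : Opr N := Epauli N k - N.+1%:R^-1 *: Xop N k.

Lemma Epauli_sq N k : Epauli N k *m Epauli N k = 1%:M.
Proof. exact/pauli_sq/bdot0r. Qed.

Section SignRelations.
Variables N k : nat.
Hypothesis k_in : (1 <= k <= N.+1)%N.
Local Notation n := N.+1.
Local Notation E := (Epauli N k).
Local Notation g := (gamma N k).
Local Notation G := (Gsum N).

Lemma bdot_Emask_unit l : (1 <= l <= N.+1)%N ->
  bdot (Emask N k) (unit_bits N l) = (k == N.+1) (+) (l == k).
Proof.
move=> l_in; rewrite /Emask; case: eqP => [k_last|k_lt].
  rewrite /ones_bits /unit_bits bdot_bits_of_pred1 /=.
  by move: l_in; rewrite k_last; nat_solve.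
by rewrite bdot_unit_unit /=; move: k_in l_in k_lt; nat_solve.
Qed.

Lemma gamma_conj_gamma l : (1 <= l <= N.+1)%N ->
  g *m gamma N l *m g = (-1) ^+ (k != l) *: gamma N l.
Proof.
move=> l_in; rewrite /gamma pauli_conj ?bdot_interval_unit_same // scale_pauli mulr1 mul1r.
by rewrite !bdot_interval_unit; congr (pauli _ _ (_ ^+ _)); move: k_in l_in; nat_solve.
Qed.

Lemma Epauli_conj_gamma l : (1 <= l <= N.+1)%N ->
  E *m gamma N l *m E = (-1) ^+ ((k == N.+1) (+) (l == k)) *: gamma N l.
Proof.
move=> l_in; rewrite /gamma /Epauli pauli_conj ?bdot0r // addbF.
by rewrite bdot_Emask_unit // scale_pauli mulr1 mul1r.
Qed.

Lemma sum_signed_gamma (s : bool) :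
  \sum_(1 <= l < N.+2) (-1) ^+ (s (+) (l == k)) *: gamma N l = (-1) ^+ s *: (G - 2%:R *: g).
Proof.
rewrite /Gsum scalerBr scaler_sumr (eq_bigr (fun l => (-1) ^+ s *: gamma N l -
  (if l == k then 2%:R * (-1) ^+ s *: gamma N l else 0))) => [|l _].
  by rewrite sumrB -big_mkcond big_nat1_eq ltnS k_in scalerA mulrC.
case: eqP => _; rewrite ?addbT ?addbF ?subr0 // -scalerBl.
by congr (_ *: _); case: s; rewrite /= ?expr0 ?expr1; ring.
Qed.

Lemma Epauli_conj_Gsum : E *m G *m E = (-1) ^+ (k == N.+1) *: (G - 2%:R *: g).
Proof.
rewrite {1}/Gsum mulmx_sumr mulmx_suml -sum_signed_gamma.
by apply: eq_big_nat => l l_in; rewrite Epauli_conj_gamma.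
Qed.

Lemma Epauli_conj_gammak : E *m g *m E = - (-1) ^+ (k == N.+1) *: g.
Proof.
rewrite Epauli_conj_gamma // eqxx addbT; congr (_ *: _).
by case: (k == N.+1); rewrite /= ?expr0 ?expr1 ?opprK.
Qed.

Lemma gamma_conj_Gsum : g *m G *m g = 2%:R *: g - G.
Proof.
rewrite {1}/Gsum mulmx_sumr mulmx_suml.
rewrite (eq_big_nat _ _ (F2 := fun l => (-1) ^+ (true (+) (l == k)) *: gamma N l))
  => [|l l_in].
  by rewrite sum_signed_gamma expr1 scaleN1r opprB.
by rewrite gamma_conj_gamma // eq_sym; case: (l == k).
Qed.

Lemma Gsum_conj_Epauli : G *m E *m G = (-1) ^+ (k == N.+1) *: (n%:R *: E - 2%:R *: Xop N k).
Proof.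
have -> : G *m E *m G = E *m (E *m G *m E) *m G by rewrite !mulmxA Epauli_sq mul1mx.
rewrite Epauli_conj_Gsum -scalemxAr -scalemxAl mulmxBr mulmxBl -scalemxAr -scalemxAl.
by rewrite -(mulmxA E G G) Gsum_sq -scalemxAr mulmx1.
Qed.

Lemma Sop_Rop b : Sop n k b = 1%:M + (-1) ^+ b *: Rop N k.
Proof.
have even_mask z : (bit (snoc_bits z (bpar z)) k == b) = (bdot (Emask N k) z == b).
  by rewrite bit_snoc /Emask; case: (k == N.+1) => //; rewrite bit_bdot.
have odd_mask z :
    (bit (snoc_bits z (~~ bpar z)) k == b) = (bdot (Emask N k) z == b (+) (k == N.+1)).
  rewrite bit_snoc /Emask; case: (k == N.+1); last by rewrite bit_bdot addbF.
  by rewrite addbT eqb_negLR.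
rewrite Sop_diag_proj (eq_diag_proj even_mask) (eq_diag_proj odd_mask) !diag_proj_pauli.
rewrite -/(Epauli N k) -scalemxAr -scalemxAl mulmxDr mulmxDl mulmx1 -scalemxAr -scalemxAl.
rewrite Gsum_conj_Epauli Gsum_sq /Rop; to_mel; rewrite signr_addb.
by case: (b); case: (k == N.+1); rewrite /= ?expr0 ?expr1; field; rewrite nat1r pnatr_eq0.
Qed.

Lemma Epauli_Xop : E *m Xop N k = g *m G.
Proof. by rewrite /Xop !mulmxA Epauli_sq mul1mx. Qed.

Lemma Xop_Epauli : Xop N k *m E = 2%:R *: 1%:M - g *m G.
Proof.
have -> : Xop N k *m E = (E *m g *m E) *m (E *m G *m E).
  by rewrite /Xop !mulmxA; congr (_ *m _); congr (_ *m _); rewrite -mulmxA Epauli_sq mulmx1.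
rewrite Epauli_conj_gammak Epauli_conj_Gsum -scalemxAl -scalemxAr mulmxBr -scalemxAr gamma_sq.
by to_mel; case: (k == N.+1); rewrite /= ?expr0 ?expr1; ring.
Qed.

Lemma Xop_sq : Xop N k *m Xop N k = n%:R *: 1%:M.
Proof.
have -> : Xop N k *m Xop N k = Xop N k *m E *m (g *m G) by rewrite /Xop !mulmxA.
rewrite Xop_Epauli mulmxBl -scalemxAl mul1mx !mulmxA gamma_conj_Gsum mulmxBl -scalemxAl.
by rewrite Gsum_sq; to_mel; ring.
Qed.

Lemma Rop_sq : Rop N k *m Rop N k = (N%:R / n%:R) *: 1%:M.
Proof.
rewrite /Rop mulmxBl !mulmxBr -!scalemxAl -!scalemxAr Epauli_sq Epauli_Xop Xop_Epauli Xop_sq.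
by to_mel; field; rewrite nat1r pnatr_eq0.
Qed.

End SignRelations.

Lemma Ecal_Epauli N k : (1 <= k <= N.+1)%N -> Ecal N.+1 k = Epauli N k.
Proof.
move=> k_in; rewrite /Ecal /Epauli /Emask; case: ltnP => k_le.
  by rewrite PZ_pauli (_ : (k == N.+1) = false) //; apply/eqP; lia.
rewrite (_ : (k == N.+1) = true); last by apply/eqP; lia.
by rewrite Zs_pauli; congr pauli; mask_solve.
Qed.

Lemma i_sandwich (x y : algC) : 'i * x * 'i * y = - (x * y).
Proof. by transitivity ('i ^+ 2 * (x * y)); [ring | rewrite sqrCi mulN1r]. Qed.

Section XopInterior.
Variables N k : nat.
Hypothesis k_in : (1 <= k <= N)%N.
Local Notation E := (Epauli N k).
Local Notation g := (gamma N k).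

Lemma Epauli_gamma_gamma l : E *m g *m gamma N l =
  pauli (bxor (unit_bits N k) (unit_bits N l))
        (bxor (interval_bits N 1 k.+1) (interval_bits N 1 l))
        (- (-1) ^+ bdot (interval_bits N 1 k.+1) (unit_bits N l)).
Proof.
rewrite /Epauli /Emask (_ : (k == N.+1) = false); last by apply/eqP; lia.
rewrite /gamma !pauli_mul bxor0l.
rewrite (_ : bxor (unit_bits N k) (interval_bits N 1 k) = interval_bits N 1 k.+1);
  last by mask_solve.
by rewrite bdot_unit_unit eqxx andbT k_in expr1; congr pauli; ring.
Qed.

Lemma Xop_term_Y l : (1 <= l < k)%N ->
  E *m g *m gamma N l = - (PY N l *m Zs N l.+1 k *m PY N k).
Proof.
move=> l_in; rewrite Epauli_gamma_gamma !PY_pauli Zs_pauli !pauli_mul opp_pauli.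
rewrite !bxor0 bdot0r; congr pauli; try mask_solve.
rewrite (_ : bxor (unit_bits N l) (interval_bits N l.+1 k) = interval_bits N l k);
  last by mask_solve.
rewrite !bdot_interval_unit mulr1 i_sandwich; case_cmp; try (exfalso; lia).
by rewrite /= ?expr0 ?expr1; ring.
Qed.

Lemma Xop_term_X l : (k < l <= N)%N ->
  E *m g *m gamma N l = - (PX N k *m Zs N k.+1 l *m PX N l).
Proof.
move=> l_in; rewrite Epauli_gamma_gamma !PX_pauli Zs_pauli !pauli_mul opp_pauli.
rewrite !bxor0 bxor0l bdot0l; congr pauli; try mask_solve.
rewrite !bdot_interval_unit; case_cmp; try (exfalso; lia).
by rewrite /= ?expr0 ?expr1; ring.
Qed.

Lemma Xop_term_last : E *m g *m gamma N N.+1 = - (PX N k *m Zs N k.+1 N.+1).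
Proof.
rewrite Epauli_gamma_gamma !PX_pauli Zs_pauli !pauli_mul opp_pauli unit_bits_out.
rewrite !bxor0 bxor0l bdot0l bdot0r; congr pauli; try mask_solve.
by rewrite expr0; ring.
Qed.

Lemma Xop_Kcal_interior : Xop N k = E - Kcal N.+1 k.
Proof.
have Y_terms : \sum_(1 <= l < k) E *m g *m gamma N l =
               - \sum_(1 <= l < k) PY N l *m Zs N l.+1 k *m PY N k.
  by rewrite -sumrN; apply: eq_big_nat => l l_in; rewrite Xop_term_Y.
have X_terms : \sum_(k.+1 <= l < N.+1) E *m g *m gamma N l =
               - \sum_(k.+1 <= l < N.+1) PX N k *m Zs N k.+1 l *m PX N l.
  by rewrite -sumrN; apply: eq_big_nat => l l_in; rewrite Xop_term_X.
have k_lt : (k < N.+1)%N by lia.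
rewrite /Kcal k_lt /Xop /Gsum mulmx_sumr (big_cat_nat (n := k)) /=; [|lia|lia].
rewrite (big_ltn (m := k)); last by lia.
rewrite big_nat_recr /=; last by lia.
rewrite Y_terms X_terms Xop_term_last -mulmxA gamma_sq mulmx1.
by to_mel; ring.
Qed.

End XopInterior.

Lemma Xop_Kcal N k : (1 <= k <= N.+1)%N -> Xop N k = Epauli N k - Kcal N.+1 k.
Proof.
move=> k_in; have [k_le|k_gt] := leqP k N.
  by apply: Xop_Kcal_interior; case/andP: k_in => ->.
have {k_in k_gt} -> : k = N.+1 by lia.
have gamma_last : gamma N N.+1 = Epauli N N.+1.
  by rewrite /gamma /Epauli /Emask eqxx unit_bits_out; congr pauli; mask_solve.
rewrite /Xop /Kcal ltnn gamma_last Epauli_sq mul1mx /Gsum big_nat_recr //= -gamma_last.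
rewrite (eq_bigr _ (fun l _ => Zs_PX_gamma N l)).
by to_mel; ring.
Qed.

Section OrthogonalProjections.
Variable m : nat.

Lemma mulmx_basis_ext (A B : Opr m) :
  (forall j, A *m (delta_mx j 0 : Vec m) = B *m delta_mx j 0) -> A = B.
Proof.
move=> eqAB; apply/matrixP => i j; have := congr1 (fun C : Vec m => C i 0) (eqAB j).
by rewrite -!colE !mxE.
Qed.

Lemma orth_proj_eig_unique S lam (P Q : Opr m) :
  is_orth_proj_eig S lam P -> is_orth_proj_eig S lam Q -> P = Q.
Proof.
case=> adjP PP eigP [adjQ QQ eigQ].
have QP : Q *m P = P.
  apply: mulmx_basis_ext => j; rewrite -!mulmxA; apply/eigQ/eigP.
  by rewrite mulmxA PP.
have PQ : P *m Q = Q.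
  apply: mulmx_basis_ext => j; rewrite -!mulmxA; apply/eigP/eigQ.
  by rewrite mulmxA QQ.
by rewrite -adjP -QP adjO_mul adjP adjQ PQ.
Qed.

(* Both eigen-equations below reduce to (-1)^b O v = v. *)
Lemma orth_proj_eig_reflection (O : Opr m) (b : bool) (r : algC) :
  r != 0 -> O *m O = 1%:M -> adjO O = O ->
  is_orth_proj_eig (1%:M + ((-1) ^+ b * r) *: O) (1 + r) (2^-1 *: (1%:M + (-1) ^+ b *: O)).
Proof.
move=> r_neq0 OO adjO_O; split.
- apply: mel_ext => y x; rewrite mel_adjO !(mel_scale, mel_add, mel1) !(rmorphM, rmorphD) /=.
  rewrite conjC_nat eq_sym -mel_adjO adjO_O geC0_conj ?invr_ge0 ?ler0n //.
  by case: b; rewrite /= ?expr0 ?expr1 ?conjC1 ?conjCN1.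
- rewrite -!scalemxAl -!scalemxAr !(mulmxDl, mulmxDr) !mul1mx !mulmx1.
  rewrite -!scalemxAl -!scalemxAr OO.
  by to_mel; case: b; rewrite /= ?expr0 ?expr1; field.
move=> v; rewrite -scalemxAl !mulmxDl !mul1mx -!scalemxAl.
split=> eq_v; apply: vel_ext => y; have := congr1 (fun u => vel u y) eq_v;
  rewrite !(vel_add, vel_scale) => eq_vy.
- have -> : (-1) ^+ b * r * vel (O *m v) y = r * vel v y; last by ring.
  transitivity (r * (2%:R * (2^-1 * (vel v y + (-1) ^+ b * vel (O *m v) y)) - vel v y)).
    by field.
  by rewrite eq_vy; ring.
- suff -> : (-1) ^+ b * vel (O *m v) y = vel v y by field.
  by apply: (mulfI r_neq0); apply: (addrI (vel v y)); rewrite mulrA (mulrC r) eq_vy; ring.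
Qed.

End OrthogonalProjections.

Definition Obs n k : Opr n.-1 :=
  sqrtC (mu n) *: Ecal n k + (sqrtC (n%:R * (n.-1)%:R))^-1 *: Kcal n k.

Section Observable.
Variables N k : nat.
Hypotheses (N_gt0 : (0 < N)%N) (k_in : (1 <= k <= N.+1)%N).
Local Notation n := N.+1.
Local Notation r := (sqrtC (mu n)).

Lemma sqrtC_mu_neq0 : r != 0.
Proof. by rewrite sqrtC_eq0 mulf_neq0 ?invr_eq0 ?pnatr_eq0 // -lt0n. Qed.

Lemma sqrtC_mu_sq : r * r = N%:R / n%:R.
Proof. by rewrite -expr2 sqrtCK. Qed.

Lemma sqrtC_mu_Kcoef : r * (sqrtC (n%:R * N%:R))^-1 = n%:R^-1.
Proof.
apply/eqP; rewrite -(@eqrXn2 _ 2) //; last first.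
- by rewrite invr_ge0 ler0n.
- by rewrite /mu mulr_ge0 ?invr_ge0 ?sqrtC_ge0 ?divr_ge0 ?mulr_ge0 ?ler0n.
rewrite exprMn sqrtCK exprVn sqrtCK /mu /=; apply/eqP; field.
by rewrite nat1r !pnatr_eq0 -!lt0n N_gt0.
Qed.

Lemma Rop_Obs : Rop N k = r *: Obs n k.
Proof.
rewrite /Rop /Obs /= Xop_Kcal // Ecal_Epauli //.
rewrite [RHS]scalerDr !scalerA sqrtC_mu_sq sqrtC_mu_Kcoef.
by to_mel; field; rewrite nat1r pnatr_eq0.
Qed.

Lemma Obs_sq : Obs n k *m Obs n k = 1%:M.
Proof.
have := Rop_sq k_in; rewrite Rop_Obs -scalemxAl -scalemxAr scalerA sqrtC_mu_sq.
by apply: scalerI; rewrite mulf_neq0 ?invr_eq0 ?pnatr_eq0 // -lt0n.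
Qed.

Lemma Obs_selfadj : adjO (Obs n k) = Obs n k.
Proof.
have := Sop_selfadj n k false; rewrite Sop_Rop // Rop_Obs //.
move: (Obs n k) => O adj_eq; apply: mel_ext => y x.
have := congr1 (fun A => mel A y x) adj_eq.
rewrite !(mel_adjO, mel_add, mel_scale, mel1) expr0 !mul1r !(rmorphD, rmorphM) /=.
rewrite conjC_nat eq_sym geC0_conj ?sqrtC_ge0 ?divr_ge0 ?ler0n //.
by move=> /addrI /(mulfI sqrtC_mu_neq0).
Qed.

End Observable.

Unset Implicit Arguments.

Theorem mainTheorem3 (n : nat) (M : bool -> nat -> Opr n.-1) :
  (2 <= n)%N ->
  (forall (b : bool) (k : nat), (1 <= k <= n)%N ->
     is_orth_proj_eig (Sop n k b) (1 + sqrtC (mu n)) (M b k)) ->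
  forall k : nat, (1 <= k <= n)%N ->
    M false k - M true k =
      sqrtC (mu n) *: Ecal n k + (sqrtC (n%:R * (n.-1)%:R))^-1 *: Kcal n k.
Proof.
case: n M => [|N] M // N_gt0 HM k k_in.
have M_Obs b : M b k = 2^-1 *: (1%:M + (-1) ^+ b *: Obs N.+1 k).
  apply: orth_proj_eig_unique (HM b k k_in) _.
  rewrite Sop_Rop // Rop_Obs // scalerA.
  apply: orth_proj_eig_reflection; [exact: sqrtC_mu_neq0 | exact: Obs_sq | exact: Obs_selfadj].
rewrite -/(Obs N.+1 k) !M_Obs; move: (Obs N.+1 k) => O.
by to_mel; rewrite expr0 expr1 mul1r mulN1r; field.
Qed.
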